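(* Let $Y=M(b;(a_1,b_1),\dots,(a_k,b_k))$, $k\ge3$, be a negative-definite Seifert manifold which is a $\mathbb Z/2\mathbb Z$-homology sphere, and assume that the class $g_0$ of the central node is trivial in $H=H_1(Y;\mathbb Z)$. Then at most $2^k$ of the series $\widehat Z_b(q)$, $b$ ranging over the spin$^c$ structures of $Y$, are nonzero.
   Context: Seifert data: $b\in\mathbb Z$, pairs $(a_i,b_i)$ with $0<b_i<a_i$, $\gcd(a_i,b_i)=1$; $Y$ is the plumbed manifold of the star-shaped tree with central node $v_0$ of framing $-b$ and $k$ legs whose framings $-c^{(j)}_1,\dots,-c^{(j)}_{n_j}$ ($c^{(j)}_i\ge2$) come from the continued fraction $a_j/b_j=c^{(j)}_1-1/(c^{(j)}_2-\cdots-1/c^{(j)}_{n_j})$. The plumbing matrix $M$ ($s$ vertices; diagonal = framings, $1$ for adjacent vertices, else $0$) is negative definite; $H\cong\mathbb Z^s/M\mathbb Z^s$, and $g_0$ is the class of the basis vector of $v_0$. Spin$^c$ structures are cosets $b\in(2\mathbb Z^s+\vec\delta)/2M\mathbb Z^s$ ($\vec\delta$ = vector of vertex degrees $\delta_v$). With $\mathrm{s.e.}\prod_v(z_v-z_v^{-1})^{2-\delta_v}=\sum_{\vec l}c_{\vec l}\vec z^{\,\vec l}$ (symmetric expansion: average of Laurent expansions about $z=0$ and $z=\infty$ of each factor), $\widehat Z_b(q)=q^{(-3s-\mathrm{Tr}M)/4}\sum_{\vec l\in b}c_{\vec l}\,q^{-(\vec l,M^{-1}\vec l)/4}$. *)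

From HB Require Import structures.
From mathcomp Require Import all_boot all_order all_algebra.
From mathcomp Require Import classical_sets fsbigop.
Set Implicit Arguments. Unset Strict Implicit. Unset Printing Implicit Defensive.
Import Order.TTheory GRing.Theory Num.Theory.
Local Open Scope ring_scope.

Fixpoint hj_val (l : seq nat) : rat :=
  match l with
  | [::] => 0
  | [:: x] => x%:R
  | x :: t => x%:R - (hj_val t)^-1
  end.

(* vertices: None = central node v0; Some (j, i) = i-th vertex (i = 0 is
   adjacent to v0) of the j-th leg, whose framings are -c j. *)
Definition vert (k : nat) (c : 'I_k -> seq nat) : finType :=
  option {j : 'I_k & 'I_(size (c j))}.

Definition vadj k (c : 'I_k -> seq nat) (v w : vert c) : bool :=
  match v, w with
  | None, None => false
  | None, Some x => nat_of_ord (tagged x) == 0%N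
  | Some x, None => nat_of_ord (tagged x) == 0%N
  | Some x, Some y =>
      (tag x == tag y) &&
      (((tagged x).+1 == tagged y :> nat) || ((tagged y).+1 == tagged x :> nat))
  end.

Definition framing k (b : int) (c : 'I_k -> seq nat) (v : vert c) : int :=
  match v with
  | None => - b
  | Some x => - ((nth 0%N (c (tag x)) (tagged x))%:Z)
  end.

Definition nverts k (c : 'I_k -> seq nat) : nat := #|vert c|.

Definition vof k (c : 'I_k -> seq nat) (i : 'I_(nverts c)) : vert c := enum_val i.

Definition plumb k (b : int) (c : 'I_k -> seq nat) : 'M[int]_(nverts c) :=
  \matrix_(i, j) (if i == j then framing b (vof i)
                  else (vadj (vof i) (vof j))%:Z).

Definition vdeg k (c : 'I_k -> seq nat) (v : vert c) : nat :=
  #|[pred w | vadj v w]|.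

Definition degvec k (c : 'I_k -> seq nat) : 'cV[int]_(nverts c) :=
  \col_i ((vdeg (vof i))%:Z).

Definition v0idx k (c : 'I_k -> seq nat) : 'I_(nverts c) :=
  enum_rank (None : vert c).

Definition neg_definite n (M : 'M[int]_n) : Prop :=
  forall x : 'cV[rat]_n, x != 0 -> ((x^T *m map_mx intr M *m x) 0 0 < 0).

(* H_1(Y;Z/2) = H / 2H = Z^s / (M Z^s + 2 Z^s) = 0 *)
Definition Z2_homology_sphere n (M : 'M[int]_n) : Prop :=
  forall x : 'cV[int]_n, exists y z : 'cV[int]_n, x = M *m y + 2%:Z *: z.

(* the class of the basis vector e_v in H = Z^s / M Z^s is trivial *)
Definition class_trivial n (M : 'M[int]_n) (v : 'I_n) : Prop :=
  exists y : 'cV[int]_n, M *m y = delta_mx v 0.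

Definition gbinom (m : int) (j : nat) : rat :=
  (\prod_(i < j) (m%:~R - i%:R)) / (j`!)%:R.

(* (z - 1/z)^m = (-1/z)^m (1 - z^2)^m : coefficient of z^l in the Laurent
   expansion about z = 0 *)
Definition exp0_coef (m l : int) : rat :=
  \sum_(j < (absz (l + m)).+1 | l + m == 2 * (j%:Z))
     ((-1) ^ m * (-1) ^+ j * gbinom m j).

(* (z - 1/z)^m = z^m (1 - z^-2)^m : coefficient of z^l in the Laurent
   expansion about z = infinity *)
Definition expinf_coef (m l : int) : rat :=
  \sum_(j < (absz (m - l)).+1 | m - l == 2 * (j%:Z))
     ((-1) ^+ j * gbinom m j).

Definition se_coef (m l : int) : rat := (exp0_coef m l + expinf_coef m l) / 2.

(* c_l for s.e. prod_v (z_v - 1/z_v)^(2 - deg v) *)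
Definition zcoef k (c : 'I_k -> seq nat) (l : 'cV[int]_(nverts c)) : rat :=
  \prod_(i < nverts c) se_coef (2 - (vdeg (vof i))%:Z) (l i 0).

Definition spinc_rep k (c : 'I_k -> seq nat) (r : 'cV[int]_(nverts c)) : Prop :=
  exists x : 'cV[int]_(nverts c), r = 2%:Z *: x + degvec c.

Definition spinc_eq k (b : int) (c : 'I_k -> seq nat)
  (r r' : 'cV[int]_(nverts c)) : Prop :=
  exists y : 'cV[int]_(nverts c), r - r' = 2%:Z *: (plumb b c *m y).

Definition qexp k (b : int) (c : 'I_k -> seq nat) (l : 'cV[int]_(nverts c)) : rat :=
  let M := map_mx (intr : int -> rat) (plumb b c) in
  let lq := map_mx (intr : int -> rat) l in
  (- (3 * (nverts c)%:R) - \tr M) / 4 - ((lq^T *m invmx M *m lq) 0 0) / 4.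

(* coefficient of q^e in Zhat_r(q) (r a representative of the spin^c
   structure); the sum is over the (finite) set of l in the coset of r
   with exponent e *)
Definition zhat_coef k (b : int) (c : 'I_k -> seq nat)
  (r : 'cV[int]_(nverts c)) (e : rat) : rat :=
  (\sum_(l \in [set l | @spinc_eq k b c l r /\ @qexp k b c l = e]) @zcoef k c l)%R.

Definition zhat_nonzero k (b : int) (c : 'I_k -> seq nat)
  (r : 'cV[int]_(nverts c)) : Prop :=
  exists e : rat, @zhat_coef k b c r e != 0.

From HB Require Import structures.
From mathcomp Require Import all_boot all_order all_algebra.
From mathcomp Require Import classical_sets fsbigop.
From mathcomp Require Import zify.
From Stdlib Require Import Classical.
Set Implicit Arguments. Unset Strict Implicit. Unset Printing Implicit Defensive.
Import Order.TTheory GRing.Theory Num.Theory.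
Local Open Scope ring_scope.

(* If Zhat_r is nonzero, some l in the spin^c class of r has a
   nonzero coefficient c_l = prod_v se_coef (2 - deg v) (l_v).  On the star
   graph every leg vertex has degree 1 or 2, and a degree-1 vertex is the
   end of its leg.  The symmetric expansion of (z - 1/z)^0 is supported at
   0, that of (z - 1/z)^1 at +-1, and every se_coef m is supported on the
   parity class of m.  Hence such an l is determined, up to an even multiple
   of the central basis vector e_v0, by the k signs of its entries at the
   leg ends.  As the class of e_v0 in H is trivial, two such l with the same
   signs lie in the same spin^c structure.  So the structures with nonzero
   Zhat inject into the 2^k sign vectors.  Of the hypotheses on Y only the
   triviality of [e_v0] and the nonemptiness of the legs enter the bound. *)

Lemma sum_neq0_witness (V : nmodType) (I : finType) (P : pred I) (F : I -> V) :
  \sum_(j | P j) F j != 0 -> exists j, P j && (F j != 0).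
Proof.
case: (pickP [pred j | P j && (F j != 0)]) => [j Hj|none]; first by exists j.
rewrite big1 ?eqxx // => j Pj; apply/eqP.
by move: (none j) => /=; rewrite Pj /= => /negbFE.
Qed.

Lemma gbinom_nat_eq0 (n j : nat) : (n < j)%N -> gbinom n%:Z j = 0.
Proof.
move=> ltnj; rewrite /gbinom (bigD1 (Ordinal ltnj)) //= -pmulrn subrr.
by rewrite !mul0r.
Qed.

Lemma se_coef_witness (m l : int) : se_coef m l != 0 ->
  exists j : nat, gbinom m j != 0 /\ (l + m = 2 * j%:Z \/ m - l = 2 * j%:Z).
Proof.
rewrite /se_coef mulf_eq0 negb_or => /andP [Hsum _].
have [H|H] : exp0_coef m l != 0 \/ expinf_coef m l != 0.
  by case: (eqVneq (exp0_coef m l) 0) Hsum => [->|]; [rewrite add0r; right|left].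
- case/sum_neq0_witness: H => j /andP [/eqP E Hj]; exists j.
  by split; [apply: contraNneq Hj => ->; rewrite mulr0 | left].
- case/sum_neq0_witness: H => j /andP [/eqP E Hj]; exists j.
  by split; [apply: contraNneq Hj => ->; rewrite mulr0 | right].
Qed.

Lemma se_coef_parity (m l : int) : se_coef m l != 0 ->
  exists t : int, l - m = 2 * t.
Proof.
case/se_coef_witness => j [_ [E|E]]; first by exists (j%:Z - m); lia.
by exists (- j%:Z); lia.
Qed.

Lemma se_coef_nat_range (n : nat) (l : int) : se_coef n%:Z l != 0 ->
  - n%:Z <= l <= n%:Z.
Proof.
case/se_coef_witness => j [Hj E]; have Hjn : (j <= n)%N.
  by rewrite leqNgt; apply: contra Hj => /gbinom_nat_eq0 ->.
by apply/andP; split; lia.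
Qed.

Lemma se_coef0_supp (l : int) : se_coef 0 l != 0 -> l = 0.
Proof. by move=> /se_coef_nat_range/andP [? ?]; lia. Qed.

Lemma se_coef1_supp (l : int) : se_coef 1 l != 0 -> l = 1 \/ l = -1.
Proof.
move=> H; have /andP [? ?] := se_coef_nat_range H.
by have [t ?] := se_coef_parity H; lia.
Qed.

Section StarGraph.
Variables (k : nat) (c : 'I_k -> seq nat).

(* A leg vertex has at most one neighbour further out and one further in:
   whether a neighbour lies further out is an injective boolean label. *)
Lemma leg_deg_le2 (x : {j : 'I_k & 'I_(size (c j))}) :
  (vdeg (Some x : vert c) <= 2)%N.
Proof.
rewrite /vdeg; case: x => j i.
pose further (w : vert c) := if w is Some y then (i < tagged y)%N else false.
apply: leq_trans (@leq_card_in _ _ further _ _) _; last by rewrite card_bool.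
move=> [[j1 i1]|] [[j2 i2]|]; rewrite !inE /= => H1 H2 // Ef.
- case/andP: H1 => /eqP E1 O1; case/andP: H2 => /eqP E2 O2; subst j1 j2.
  have -> // : i1 = i2; apply: val_inj => /=.
  by move: O1 O2 Ef; case/orP => /eqP A; case/orP => /eqP B; lia.
- by case/andP: H1 => _ /orP [/eqP E|/eqP E]; lia.
- by case/andP: H2 => _ /orP [/eqP E|/eqP E]; lia.
Qed.

Definition leg_pred (j : 'I_k) (i : 'I_(size (c j))) : vert c :=
  Some (Tagged (fun j => 'I_(size (c j)))
         (Ordinal (leq_ltn_trans (leq_pred i) (ltn_ord i)))).

(* Every leg vertex has a neighbour further in: v0 or its predecessor. *)
Lemma leg_deg_ge1 (x : {j : 'I_k & 'I_(size (c j))}) :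
  (1 <= vdeg (Some x : vert c))%N.
Proof.
rewrite /vdeg; apply/card_gt0P; case: x => j i.
case: (posnP i) => [i0|ip]; first by exists None; rewrite inE /= i0.
by exists (leg_pred i); rewrite inE /= eqxx /= prednK ?eqxx ?orbT.
Qed.

Lemma inner_leg_deg_ge2 (x : {j : 'I_k & 'I_(size (c j))}) :
  ((tagged x).+1 < size (c (tag x)))%N -> (1 < vdeg (Some x : vert c))%N.
Proof.
rewrite /vdeg; case: x => j i /= lt2; apply/card_gt1P.
exists (Some (Tagged (fun j => 'I_(size (c j))) (Ordinal lt2))).
case: (posnP i) => [i0|ip].
  by exists None; rewrite !inE /= i0 eqxx.
exists (leg_pred i); rewrite !inE /= !eqxx /= prednK ?eqxx ?orbT //.
by split => //; apply/negP => /eqP [] E; lia.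
Qed.

Hypothesis leg_nonempty : forall j, (0 < size (c j))%N.

Lemma leg_end_lt (j : 'I_k) : ((size (c j)).-1 < size (c j))%N.
Proof. by rewrite ltn_predL. Qed.

Definition leg_end (j : 'I_k) : vert c :=
  Some (Tagged (fun j => 'I_(size (c j))) (Ordinal (leg_end_lt j))).

Lemma leg_deg_cases (x : {j : 'I_k & 'I_(size (c j))}) :
  vdeg (Some x : vert c) = 2%N \/
  (vdeg (Some x : vert c) = 1%N /\ Some x = leg_end (tag x)).
Proof.
have ge1 := leg_deg_ge1 x; have le2 := leg_deg_le2 x.
have [->|Hd] : vdeg (Some x : vert c) = 2%N \/ vdeg (Some x : vert c) = 1%N.
  by lia.
  by left.
right; split=> //; have Hlast : (tagged x).+1 = size (c (tag x)).
  apply/eqP; rewrite eqn_leq ltn_ord leqNgt; apply/negP.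
  by move=> /inner_leg_deg_ge2; rewrite Hd.
clear ge1 le2; case: x Hd Hlast => j i /= _ Hlast; congr Some; congr existT.
by apply: val_inj => /=; lia.
Qed.

End StarGraph.

Section LegSigns.
Variables (k : nat) (c : 'I_k -> seq nat).
Hypothesis leg_nonempty : forall j, (0 < size (c j))%N.

Definition leg_signs (l : 'cV[int]_(nverts c)) : {ffun 'I_k -> bool} :=
  [ffun j => 0 < l (enum_rank (leg_end leg_nonempty j)) 0].

Lemma zcoef_factor_neq0 (l : 'cV[int]_(nverts c)) (p : 'I_(nverts c)) :
  zcoef l != 0 -> se_coef (2 - (vdeg (vof p))%:Z) (l p 0) != 0.
Proof. by move=> /prodf_neq0 H; apply: H. Qed.

Lemma zcoef_entry_cases (p : 'I_(nverts c)) : p != v0idx c ->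
  (forall l, zcoef l != 0 -> l p 0 = 0) \/
  exists j, p = enum_rank (leg_end leg_nonempty j) /\
    forall l, zcoef l != 0 -> l p 0 = 1 \/ l p 0 = -1.
Proof.
move=> hp; have Ep : p = enum_rank (vof p) by rewrite enum_valK.
case E: (vof p) => [x|]; last by case/eqP: hp; rewrite Ep E.
case: (leg_deg_cases leg_nonempty x) => [Hd|[Hd Hend]].
- left => l /(zcoef_factor_neq0 p); rewrite E Hd; exact: se_coef0_supp.
- right; exists (tag x); split; first by rewrite Ep E Hend.
  by move=> l /(zcoef_factor_neq0 p); rewrite E Hd; exact: se_coef1_supp.
Qed.

Lemma same_signs_central_shift (l1 l2 : 'cV[int]_(nverts c)) :
  zcoef l1 != 0 -> zcoef l2 != 0 -> leg_signs l1 = leg_signs l2 ->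
  exists t : int, l1 - l2 = 2%:Z *: (t *: delta_mx (v0idx c) 0).
Proof.
move=> Z1 Z2 Hsig.
have [t1 T1] := se_coef_parity (zcoef_factor_neq0 (v0idx c) Z1).
have [t2 T2] := se_coef_parity (zcoef_factor_neq0 (v0idx c) Z2).
exists (t1 - t2); apply/matrixP => p q; rewrite (ord1 q) !mxE.
case: (eqVneq p (v0idx c)) => [->|hp]; first by rewrite eqxx /=; lia.
suff -> : l1 p 0 = l2 p 0 by rewrite subrr /= !mulr0.
case: (zcoef_entry_cases hp) => [H0|[j [Ep Hpm]]]; first by rewrite !H0.
move/ffunP: Hsig => /(_ j); rewrite !ffunE -Ep.
have := Hpm _ Z1; have := Hpm _ Z2.
by case: (ltrP 0 (l1 p 0)); case: (ltrP 0 (l2 p 0)) => //= *; lia.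
Qed.

End LegSigns.

Section SpincClasses.
Variables (k : nat) (b : int) (c : 'I_k -> seq nat).

Lemma spinc_eq_sym (r r' : 'cV[int]_(nverts c)) :
  spinc_eq b r r' -> spinc_eq b r' r.
Proof. by case=> y E; exists (- y); rewrite mulmxN scalerN -E opprB. Qed.

Lemma spinc_eq_trans (r r' r'' : 'cV[int]_(nverts c)) :
  spinc_eq b r r' -> spinc_eq b r' r'' -> spinc_eq b r r''.
Proof.
case=> y E [y' E']; exists (y + y').
by rewrite mulmxDr scalerDr -E -E' addrA subrK.
Qed.

Lemma spinc_eq_central_shift (l l' : 'cV[int]_(nverts c)) (t : int) :
  class_trivial (plumb b c) (v0idx c) ->
  l - l' = 2%:Z *: (t *: delta_mx (v0idx c) 0) -> spinc_eq b l l'.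
Proof. by case=> y0 Hy0 E; exists (t *: y0); rewrite -scalemxAr Hy0. Qed.

Lemma zhat_nonzero_witness (r : 'cV[int]_(nverts c)) :
  zhat_nonzero b r -> exists l, spinc_eq b l r /\ zcoef l != 0.
Proof.
case=> e He; apply: NNPP => none; move/eqP: He; apply.
rewrite /zhat_coef fsbig1 // => l [Hl _]; apply/eqP/negPn/negP => Hz.
by apply: none; exists l.
Qed.

End SpincClasses.

Theorem corollary4p2 (k : nat) (b : int) (a bb : 'I_k -> nat)
  (c : 'I_k -> seq nat) :
  (3 <= k)%N ->
  (forall j, 0 < bb j < a j)%N ->
  (forall j, coprime (a j) (bb j)) ->
  (forall j, (0 < size (c j))%N /\ all (fun x => 2 <= x)%N (c j)
             /\ hj_val (c j) = (a j)%:R / (bb j)%:R) ->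
  neg_definite (plumb b c) ->
  Z2_homology_sphere (plumb b c) ->
  class_trivial (plumb b c) (v0idx c) ->
  forall (m : nat) (r : 'I_m -> 'cV[int]_(nverts c)),
    (forall i, spinc_rep (r i)) ->
    (forall i j, i != j -> ~ spinc_eq b (r i) (r j)) ->
    (forall i, zhat_nonzero b (r i)) ->
    (m <= 2 ^ k)%N.
Proof.
move=> _ _ _ hc _ _ hv0 m r _ hdist hnz.
have legs_nonempty j : (0 < size (c j))%N := (hc j).1.
have [L HL] := fin_all_exists (fun i => zhat_nonzero_witness (hnz i)).
have card_signs : #|{ffun 'I_k -> bool}| = (2 ^ k)%N.
  by rewrite card_ffun card_bool card_ord.
rewrite -{1}(card_ord m) -card_signs.
(* the leg signs of l_i determine the spin^c structure of r_i *)
apply: (@leq_card _ _ (fun i => leg_signs legs_nonempty (L i))) => i1 i2 Hsig.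
apply/eqP; apply: contraT => Hne; case: (hdist _ _ Hne).
have [t Ht] := same_signs_central_shift (HL i1).2 (HL i2).2 Hsig.
apply: spinc_eq_trans (spinc_eq_sym (HL i1).1) _.
exact: spinc_eq_trans (spinc_eq_central_shift hv0 Ht) (HL i2).1.
Qed.
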